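(* Fix $p\geq 3$, let $\lambda=\lambda_p=2\cos(\pi/p)$ and $U=ST$ where $S=\begin{pmatrix}1&\lambda\\0&1\end{pmatrix}$, $T=\begin{pmatrix}0&-1\\1&0\end{pmatrix}$. Then $\frac{1}{U^k(0)}=U^{p-k+1}(0)$ for every integer $k$.
   Context: Matrices act on $\mathbb{R}\cup\{\infty\}$ by linear fractional transformations $z\mapsto\frac{az+b}{cz+d}$, with the conventions $1/0=\infty$ and $1/\infty=0$. *)

From HB Require Import structures.
From mathcomp Require Import all_boot all_order all_algebra.
From mathcomp Require Import all_classical all_reals all_analysis.
Set Implicit Arguments. Unset Strict Implicit. Unset Printing Implicit Defensive.
Import Order.TTheory GRing.Theory Num.Theory.
Local Open Scope ring_scope.

(* The extended real line R ∪ {∞}: [Some x] is the real x, [None] is ∞. *)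
Definition extR (R : realType) := option R.

Definition ext_inv (R : realType) (z : extR R) : extR R :=
  match z with
  | None => Some 0
  | Some x => if x == 0 then None else Some x^-1
  end.

Definition mx2 (R : realType) (a b c d : R) : 'M[R]_2 :=
  \matrix_(i < 2, j < 2)
    if i == ord0 then (if j == ord0 then a else b) else (if j == ord0 then c else d).

Definition mobius (R : realType) (M : 'M[R]_2) (z : extR R) : extR R :=
  let a := M ord0 ord0 in let b := M ord0 ord_max in
  let c := M ord_max ord0 in let d := M ord_max ord_max in
  match z with
  | Some x => if c * x + d == 0 then None else Some ((a * x + b) / (c * x + d))
  | None => if c == 0 then None else Some (a / c)
  end.

Definition lambda_p (R : realType) (p : nat) : R := 2 * cos (pi / p%:R).
Definition Smx (R : realType) (p : nat) : 'M[R]_2 := mx2 1 (lambda_p R p) 0 1.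
Definition Tmx (R : realType) : 'M[R]_2 := mx2 0 (-1) 1 0.
Definition Umx (R : realType) (p : nat) : 'M[R]_2 := Smx R p *m Tmx R.

From HB Require Import structures.
From mathcomp Require Import all_boot all_order all_algebra.
From mathcomp Require Import all_classical all_reals all_analysis.
From mathcomp Require Import ring lra.
Set Implicit Arguments. Unset Strict Implicit. Unset Printing Implicit Defensive.
Import Order.TTheory GRing.Theory Num.Theory.
Local Open Scope ring_scope.

(* With [t = pi / p], the matrix [U = [[2 cos t, -1], [1, 0]]] satisfies
   [sin t * U^k = [[sin ((k+1)t), -sin (k t)], [sin (k t), -sin ((k-1)t)]]]
   for every integer [k], by the recursion
   [sin ((x+1)t) + sin ((x-1)t) = 2 cos t sin (x t)].  Hence
   [U^k(0) = sin (k t) / sin ((k-1)t)], and since [p t = pi] the reflection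
   [sin (pi - y) = sin y] turns [U^(p-k+1)(0)] into the reciprocal fraction. *)

Section Mx2.
Variable R : realType.

Lemma mx2M (a b c d a' b' c' d' : R) :
  mx2 a b c d * mx2 a' b' c' d'
  = mx2 (a * a' + b * c') (a * b' + b * d') (c * a' + d * c') (c * b' + d * d').
Proof.
apply/matrixP => i j; rewrite !mxE !big_ord_recl big_ord0 !mxE /=.
by case: i => [[|[|?]] ?] //=; case: j => [[|[|?]] ?] //=; rewrite addr0.
Qed.

Lemma mx2Z (k a b c d : R) : k *: mx2 a b c d = mx2 (k * a) (k * b) (k * c) (k * d).
Proof.
apply/matrixP => i j; rewrite !mxE.
by case: i => [[|[|?]] ?] //=; case: j => [[|[|?]] ?].
Qed.

Lemma mx2_1 : mx2 1 0 0 1 = 1 :> 'M[R]_2.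
Proof.
apply/matrixP => i j; rewrite !mxE.
by case: i => [[|[|?]] ?] //=; case: j => [[|[|?]] ?].
Qed.

End Mx2.

Section ExtFrac.
Variable R : realType.

Definition ext_frac (b d : R) : extR R := if d == 0 then None else Some (b / d).

Lemma ext_fracN (b d : R) : ext_frac (- b) (- d) = ext_frac b d.
Proof. by rewrite /ext_frac oppr_eq0 invrN mulrNN. Qed.

Lemma ext_inv_frac (b d : R) : (b != 0) || (d != 0) ->
  ext_inv (ext_frac b d) = ext_frac d b.
Proof.
rewrite /ext_frac; have [-> /=|d0 _] := eqVneq d 0.
  by rewrite orbF mul0r => /negPf ->.
by rewrite /= mulf_eq0 invr_eq0 (negPf d0) orbF invf_div.
Qed.

Lemma mobius_mx2_0 (a b c d : R) : mobius (mx2 a b c d) (Some 0) = ext_frac b d.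
Proof. by rewrite /mobius /ext_frac !mxE /= !mulr0 !add0r. Qed.

Lemma mobiusZ (k : R) (M : 'M[R]_2) (z : extR R) : k != 0 ->
  mobius (k *: M) z = mobius M z.
Proof.
move=> k0; rewrite /mobius !mxE; case: z => [x|].
  rewrite -!(mulrA k) -!mulrDr.
  by rewrite mulf_eq0 (negPf k0) /= -mulf_div divff // mul1r.
by rewrite mulf_eq0 (negPf k0) /= -mulf_div divff // mul1r.
Qed.

End ExtFrac.

Lemma sin_sub_eq0 (R : realType) (x t : R) :
  sin x = 0 -> sin (x - t) = 0 -> sin t = 0.
Proof.
rewrite sinB => sx; rewrite sx mul0r sub0r => /eqP.
rewrite oppr_eq0 mulf_eq0 => /orP[/eqP cx|/eqP //].
by have := cos2Dsin2 x; rewrite sx cx; lra.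
Qed.

Section ChebyshevPowers.
Variables (R : realType) (t : R).

Let U := mx2 (2 * cos t) (-1) 1 0.
Let C (x : R) :=
  mx2 (sin ((x + 1) * t)) (- sin (x * t)) (sin (x * t)) (- sin ((x - 1) * t)).

Lemma sin_chebyshev_rec (x : R) :
  sin ((x + 1) * t) + sin ((x - 1) * t) = 2 * cos t * sin (x * t).
Proof. by rewrite mulrDl mulrBl mul1r sinD sinB; ring. Qed.

Lemma mulUC (x : R) : U * C x = C (x + 1).
Proof.
have := sin_chebyshev_rec x; have := sin_chebyshev_rec (x + 1).
rewrite /U /C mx2M (_ : x + 1 + 1 = x + 2) ?addrK; last by ring.
by move=> h2 h1; congr mx2; lra.
Qed.

Lemma U_unit : U \is a GRing.unit.
Proof.
by apply/unitrP; exists (mx2 0 1 (-1) (2 * cos t)); rewrite !mx2M -mx2_1;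
  split; congr mx2; ring.
Qed.

Lemma scale_sin_expz (k : int) : sin t *: U ^ k = C k%:~R.
Proof.
elim/int_rec: k => [|n IHn|n IHn].
- by rewrite expr0z -mx2_1 mx2Z /C !(mul0r, add0r, sub0r, mul1r, mulN1r)
    sinN sin0 !(mulr0, mulr1, oppr0, opprK).
- by rewrite exprSz scalerAr IHn mulUC -!pmulrn natr1.
- apply: (mulrI U_unit); rewrite mulUC -scalerAr -{1}(expr1z U) -exprzDr ?U_unit //.
  by rewrite intS opprD addrA subrr add0r IHn; congr C; ring.
Qed.

Lemma mobius_expz_0 (k : int) : sin t != 0 ->
  mobius (U ^ k) (Some 0) = ext_frac (sin (k%:~R * t)) (sin ((k%:~R - 1) * t)).
Proof.
by move=> st; rewrite -(mobiusZ _ _ st) scale_sin_expz mobius_mx2_0 ext_fracN.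
Qed.

End ChebyshevPowers.

Lemma sin_piB (R : realType) (x : R) : sin (pi - x) = sin x.
Proof. by rewrite addrC sinDpi sinN opprK. Qed.

Lemma sin_pi_div_neq0 (R : realType) (p : nat) : (2 <= p)%N -> sin (pi / p%:R) != 0 :> R.
Proof.
move=> p_ge2; have p_gt0 : 0 < p%:R :> R by rewrite ltr0n (leq_trans _ p_ge2).
apply/lt0r_neq0/sin_gt0_pi; rewrite divr_gt0 ?pi_gt0 //=.
by rewrite ltr_pdivrMr // ltr_pMr ?pi_gt0 // (ltr_nat R 1 p).
Qed.

Lemma Umx_mx2 (R : realType) (p : nat) : Umx R p = mx2 (lambda_p R p) (-1) 1 0.
Proof. by rewrite [Umx R p]mx2M; congr mx2; ring. Qed.

Theorem lemma4p2 (R : realType) (p : nat) (hp : (3 <= p)%N) (k : int) :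
  ext_inv (mobius (Umx R p ^ k) (Some 0))
  = mobius (Umx R p ^ ((p%:Z - k + 1)%R)) (Some 0).
Proof.
rewrite Umx_mx2 /lambda_p; set t := pi / p%:R.
have sint_neq0 : sin t != 0 by apply: sin_pi_div_neq0; apply: ltnW.
have pt : p%:R * t = pi by rewrite /t mulrC divfK // pnatr_eq0 -lt0n (ltn_trans _ hp).
rewrite !mobius_expz_0 // ext_inv_frac; last first.
  apply: contraR sint_neq0; rewrite negb_or !negbK => /andP[/eqP sk /eqP sk1].
  by apply/eqP/(sin_sub_eq0 sk); rewrite -sk1 mulrBl mul1r.
by congr ext_frac; rewrite -[LHS]sin_piB -pt; congr sin; ring.
Qed.
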